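(* Let $g\colon[0,\infty)\to\mathbb{R}$ be strictly monotone with $0<c_1\le g(\lambda)<1/2$ for all $\lambda\ge0$ and $|g(\lambda)-g(\lambda')|\le c_2|\lambda-\lambda'|$ for all $\lambda,\lambda'\ge0$, for some constants $c_1>0$ and $c_2<1/2$. Let $f(\lambda,y)=g(\lambda)+y/2$. Then $f$ satisfies $|f(\lambda,y)-f(\lambda',y')|\le\kappa_1|\lambda-\lambda'|+\kappa_2|y-y'|$ with $\kappa_1=c_2$, $\kappa_2=1/2$, $\kappa_1+\kappa_2<1$, and for the strictly stationary process $((N_t,\lambda_t))_{t\in\mathbb{Z}}$ with $N_t\mid\sigma(\lambda_s,N_s:s\le t-1)\sim\mathrm{Poisson}(\lambda_t)$ and $\lambda_t=f(\lambda_{t-1},N_{t-1})$, one has $2g(\lambda_{t-1})=2\lambda_t-\lfloor2\lambda_t\rfloor$ for all $t$, so $\lambda_{t-1}$ (and hence the whole past $(\lambda_s)_{s\le t}$) is a measurable function of $\lambda_t$; in particular the intensity process $(\lambda_t)_{t\in\mathbb{Z}}$ (and hence also $((N_t,\lambda_t))_{t\in\mathbb{Z}}$) is not strongly mixing.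
   Context: Strong mixing of a stationary process $(X_t)_{t\in\mathbb Z}$ means $\alpha(n)=\sup_{A\in\sigma(X_s:s\le0),B\in\sigma(X_s:s\ge n)}|P(A\cap B)-P(A)P(B)|\to0$. $\lfloor x\rfloor$ denotes the integer part. *)

From HB Require Import structures.
From mathcomp Require Import all_boot all_order all_algebra.
From mathcomp Require Import all_classical all_reals all_analysis.
Set Implicit Arguments. Unset Strict Implicit. Unset Printing Implicit Defensive.
Import Order.TTheory GRing.Theory Num.Theory.
Local Open Scope classical_set_scope.
Local Open Scope ring_scope.

Definition fpois {R : realType} (g : R -> R) (l y : R) : R := g l + y / 2.

Definition gen_sigma {d d'} {T : measurableType d} {V : measurableType d'}
  (X : int -> T -> V) (S : set int) : set (set T) :=
  <<s [set X s @^-1` B | s in S & B in [set B | measurable B]] >>.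

Definition alpha_mix {d d'} {T : measurableType d} {V : measurableType d'}
  {R : realType} (P : probability T R) (X : int -> T -> V) (n : nat) : \bar R :=
  ereal_sup [set x | exists A B, gen_sigma X [set s | s <= 0]%R A /\
       gen_sigma X [set s | (n%:Z <= s)%R] B /\
       x = `|(P (A `&` B) - P A * P B)%E|%E].

Definition strongly_mixing {d d'} {T : measurableType d} {V : measurableType d'}
  {R : realType} (P : probability T R) (X : int -> T -> V) : Prop :=
  (alpha_mix P X n @[n --> \oo] --> 0%E).

(* strict stationarity: all finite-dimensional distributions (determined on
   rectangles) are shift invariant *)
Definition strictly_stationary {d d'} {T : measurableType d} {V : measurableType d'}
  {R : realType} (P : probability T R) (X : int -> T -> V) : Prop :=
  forall (s : seq (int * set V)) (h : int),
    (forall p, p \in s -> measurable p.2) ->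
    P (\big[setI/setT]_(p <- s) (X (p.1 + h)%R @^-1` p.2)) =
    P (\big[setI/setT]_(p <- s) (X p.1 @^-1` p.2)).

(** Since [0 < g < 1/2] and [N_{t-1}] is an integer, [2 lam_t = 2 g(lam_{t-1}) + N_{t-1}]
    splits [2 lam_t] into its integer part [N_{t-1}] and its fractional part
    [2 g(lam_{t-1})].  A strictly monotone [g] has a Borel left inverse, so
    [lam_{t-1}], and by iteration every [lam_s] with [s <= t], is a Borel function
    of [lam_t].  Hence the event [{lam_0 < 1/2} = {N_{-1} = 0}] lies in
    [sigma(lam_s : s >= n)] for every [n]; its probability [p = E exp(-lam_{-1})]
    is in [(0, 1)], so [alpha(n) >= p - p^2 > 0] for all [n]. *)

From HB Require Import structures.
From mathcomp Require Import all_boot all_order all_algebra.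
From mathcomp Require Import all_classical all_reals all_analysis.
From mathcomp Require Import measurable_realfun.
From mathcomp Require Import lra ring zify.
Set Implicit Arguments. Unset Strict Implicit. Unset Printing Implicit Defensive.
Import Order.TTheory GRing.Theory Num.Theory.
Local Open Scope classical_set_scope.
Local Open Scope ring_scope.

Section strong_mixing.
Context {d d' d''} {T : measurableType d} {V : measurableType d'}
  {W : measurableType d''} {R : realType}.
Variables (P : probability T R) (X : int -> T -> V).

Lemma gen_sigma_setT (S : set int) : gen_sigma X S setT.
Proof.
have [sigma0 sigmaC _] := smallest_sigma_algebra setT
  [set X s @^-1` B | s in S & B in [set B | measurable B]].
by have := sigmaC _ sigma0; rewrite setD0.
Qed.

Lemma gen_sigma_comp_preimage (S : set int) s (h : V -> W) (B : set W) :
  S s -> measurable_fun setT h -> measurable B ->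
  gen_sigma X S ((h \o X s) @^-1` B).
Proof.
move=> Ss mh mB; apply: sub_sigma_algebra; exists s => //.
by exists (h @^-1` B) => //; rewrite -[_ @^-1` _]setTI; exact: mh.
Qed.

Lemma not_strongly_mixing_of_tail_event (A : set T) (p : R) :
  (forall n : nat, gen_sigma X [set s | n%:Z <= s] A) ->
  gen_sigma X [set s | s <= 0] A ->
  P A = p%:E -> 0 < p < 1 -> ~ strongly_mixing P X.
Proof.
move=> An A0 PA /andP[p0 p1] mix.
have alpha_lb : \forall n \near \oo, ((p - p * p)%:E <= alpha_mix P X n)%E.
  near=> n; apply: ereal_sup_ubound; exists A, A; split => //; split => //.
  rewrite setIid PA -EFinM -EFinB /= ger0_norm // subr_ge0.
  by rewrite ler_piMr // ltW.
have := @lime_ge _ _ eventually_filter _ _ _ (cvgP _ mix) alpha_lb.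
rewrite (cvg_lim _ mix) // lee_fin subr_le0 -{1}(mulr1 p) ler_pM2l //.
by rewrite leNgt p1.
Unshelve. all: end_near.
Qed.

(* With [n = 0] the hypothesis also puts the event in [sigma(X_s : s <= 0)]. *)
Lemma determined_not_strongly_mixing (Y : T -> W) (B : set W) (p : R) :
  measurable B ->
  (forall n : nat, exists2 h : V -> W, measurable_fun setT h & Y = h \o X n) ->
  P (Y @^-1` B) = p%:E -> 0 < p < 1 -> ~ strongly_mixing P X.
Proof.
move=> mB hY; apply: not_strongly_mixing_of_tail_event => [n|].
  by have [h mh ->] := hY n; apply: gen_sigma_comp_preimage => /=.
by have [h mh ->] := hY 0%N; apply: gen_sigma_comp_preimage => /=.
Qed.

End strong_mixing.

Lemma integral_probability_gt0_bounded {d} {T : measurableType d} {R : realType}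
  (P : probability T R) (f : T -> R) (b : R) :
  measurable_fun setT f -> (forall w, 0 < f w <= b) ->
  exists2 r, (\int[P]_(w in setT) (f w)%:E = r%:E)%E & 0 < r <= b.
Proof.
move=> mf fb; have f0 w : (0 <= (f w)%:E)%E by rewrite lee_fin ltW // (andP (fb w)).1.
have mfE : measurable_fun setT (fun w => (f w)%:E) by exact/measurable_EFinP.
have Ile : (\int[P]_(w in setT) (f w)%:E <= b%:E)%E.
  apply: (@le_trans _ _ (\int[P]_(w in setT) (cst b%:E) w)%E).
    by apply: ge0_le_integral => // w _; rewrite lee_fin (andP (fb w)).2.
  by rewrite integral_cst // [X in (_ * X)%E](_ : _ = 1%E) ?mule1 //; exact: probability_setT.
have Igt : (0 < \int[P]_(w in setT) (f w)%:E)%E.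
  rewrite lt_neqAle integral_ge0 ?andbT //; apply/eqP => /esym I0.
  have : (\int[P]_(w in setT) `|(f w)%:E| = 0)%E.
    by rewrite -I0; apply: eq_integral => w _; rewrite gee0_abs.
  case/(ae_eq_integral_abs P measurableT mfE).1 => M [mM PM0 negM].
  have TM : setT `<=` M.
    by move=> w _; apply: negM => /(_ I) /eqP; rewrite eqe gt_eqF // (andP (fb w)).1.
  have : (P setT <= P M)%E := le_measure P (mem_set measurableT) (mem_set mM) TM.
  by rewrite (probability_setT P) PM0 lee_fin ler10.
move: Ile Igt; case: (\int[P]_(w in setT) (f w)%:E)%E => [r| |] //=.
by rewrite lee_fin lte_fin => rb r0; exists r => //; rewrite r0.
Qed.

Lemma measurable_floor (R : realType) :
  measurable_fun setT (fun x : R => (Num.floor x)%:~R : R).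
Proof.
by apply: nondecreasing_measurable => // x y xy; rewrite ler_int le_floor.
Qed.

(* [G u] is the supremum of [1 - exp(-x)] over [{x >= 0 | g x <= u}] (and 0): the
   compression [x |-> 1 - exp(-x)] keeps it finite, [G] is nondecreasing hence
   Borel, and [G (g l) = 1 - exp(-l)] can be inverted explicitly. *)
Lemma strict_incr_measurable_linv (R : realType) (g : R -> R) :
  (forall x y, 0 <= x -> 0 <= y -> x < y -> g x < g y) ->
  exists2 H : R -> R, measurable_fun setT H & forall l, 0 <= l -> H (g l) = l.
Proof.
move=> gincr.
pose S u := [set y : R | y = 0 \/ exists x, [/\ 0 <= x, g x <= u & y = 1 - expR (- x)]].
pose G u := sup (S u).
have S0 u : S u !=set0 by exists 0; left.
have S_sup u : has_sup (S u).
  split => //; exists 1 => y [->|[x [_ _ ->]]]; first exact: ler01.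
  by rewrite lerBlDr lerDl expR_ge0.
have G_homo : {homo G : u v / u <= v}.
  move=> u v uv; apply: ge_sup => // y [->|[x [x0 gx ->]]].
    by apply: sup_upper_bound => //; left.
  by apply: sup_upper_bound => //; right; exists x; split => //; exact: le_trans uv.
have Gg l : 0 <= l -> G (g l) = 1 - expR (- l).
  move=> l0; apply/eqP; rewrite eq_le; apply/andP; split.
    apply: ge_sup => // y [->|[x [x0 gx ->]]].
      by rewrite subr_ge0 expR_le1 oppr_le0.
    rewrite lerD2l lerN2 ler_expR lerN2 leNgt.
    by apply/negP => /(gincr _ _ l0 x0); rewrite ltNge gx.
  by apply: sup_upper_bound => //; right; exists l; split.
exists (fun u => - ln (1 - G u)); last first.
  by move=> l l0; rewrite Gg // opprB addrC subrK expRK opprK.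
apply: measurable_funN; apply: measurableT_comp; first exact: measurable_ln.
apply: measurable_funB; first exact: measurable_cst.
exact: nondecreasing_measurable.
Qed.

Lemma strict_mono_measurable_linv (R : realType) (g : R -> R) :
  (forall x y, 0 <= x -> 0 <= y -> x < y -> g x < g y) \/
  (forall x y, 0 <= x -> 0 <= y -> x < y -> g y < g x) ->
  exists2 H : R -> R, measurable_fun setT H & forall l, 0 <= l -> H (g l) = l.
Proof.
case=> [gincr|gdecr]; first exact: strict_incr_measurable_linv.
have [H mH HK] : exists2 H : R -> R, measurable_fun setT H &
    forall l, 0 <= l -> H (- g l) = l.
  apply: (@strict_incr_measurable_linv R (fun x => - g x)) => x y x0 y0 xy.
  by rewrite ltrN2; exact: gdecr.
by exists (H \o -%R) => //; exact: measurableT_comp.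
Qed.

Section link_function.
Variables (R : realType) (g : R -> R).

Lemma fpois_lipschitz (c2 : R) l l' y y' :
  (forall l l', 0 <= l -> 0 <= l' -> `|g l - g l'| <= c2 * `|l - l'|) ->
  0 <= l -> 0 <= l' ->
  `|fpois g l y - fpois g l' y'| <= c2 * `|l - l'| + 1 / 2 * `|y - y'|.
Proof.
move=> glip l0 l'0.
have -> : fpois g l y - fpois g l' y' = (g l - g l') + 1 / 2 * (y - y').
  by rewrite /fpois; field.
apply: le_trans (ler_normD _ _) _; apply: lerD; first exact: glip.
by rewrite normrM ger0_norm.
Qed.

Lemma floor_twice_fpois l (n : nat) :
  0 <= g l < 1 / 2 -> Num.floor (2 * fpois g l n%:R) = n.
Proof.
by move=> /andP[g0 g1]; apply: floor_def; rewrite /fpois intrD /=; apply/andP; split; lra.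
Qed.

Lemma twice_g_fpois l (n : nat) : 0 <= g l < 1 / 2 ->
  2 * g l = 2 * fpois g l n%:R - (Num.floor (2 * fpois g l n%:R))%:~R.
Proof. by move=> gl; rewrite floor_twice_fpois // /fpois; field. Qed.

Lemma fpois_measurable_linv :
  (forall x y, 0 <= x -> 0 <= y -> x < y -> g x < g y) \/
  (forall x y, 0 <= x -> 0 <= y -> x < y -> g y < g x) ->
  (forall l, 0 <= l -> 0 <= g l < 1 / 2) ->
  exists2 phi : R -> R, measurable_fun setT phi &
    forall l (n : nat), 0 <= l -> phi (fpois g l n%:R) = l.
Proof.
move=> gmono gbnd; have [H mH HK] := strict_mono_measurable_linv gmono.
exists (fun x => H (x - (Num.floor (2 * x))%:~R / 2)).
  apply: measurableT_comp mH _; apply: measurable_funB => //.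
  by apply: measurable_funM => //; exact: measurableT_comp (@measurable_floor R) _.
move=> l n l0; rewrite -[X in _ = X]HK //; congr H.
by have := twice_g_fpois n (gbnd l l0); lra.
Qed.

End link_function.

Section poisson_autoregression.
Variables (R : realType) (g : R -> R) (c1 : R).
Hypothesis c1_gt0 : 0 < c1.
Hypothesis g_bnd : forall l, 0 <= l -> c1 <= g l /\ g l < 1 / 2.
Variables (d : measure_display) (T : measurableType d) (P : probability T R).
Variables (N : int -> T -> nat) (lam : int -> T -> R).
Hypothesis lam_ge0 : forall t w, 0 <= lam t w.
Hypothesis lam_rec : forall t w, lam t w = fpois g (lam (t - 1) w) (N (t - 1) w)%:R.

Let g_bnd01 l : 0 <= l -> 0 <= g l < 1 / 2.
Proof. by move=> /g_bnd[c1g g1]; rewrite g1 andbT ltW // (lt_le_trans c1_gt0). Qed.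

Lemma twice_g_lam t w :
  2 * g (lam (t - 1) w) = 2 * lam t w - (Num.floor (2 * lam t w))%:~R.
Proof. by rewrite [lam t w]lam_rec; exact/twice_g_fpois/g_bnd01. Qed.

Lemma lam_ge_c1 t w : c1 <= lam t w.
Proof.
have [c1g _] := g_bnd (lam_ge0 (t - 1) w).
have N0 : 0 <= (N (t - 1) w)%:R :> R by [].
by rewrite lam_rec /fpois; lra.
Qed.

Lemma lam_lt_half t : [set w | lam t w < 1 / 2] = [set w | N (t - 1) w = 0%N].
Proof.
apply/seteqP; split => w /=; rewrite lam_rec /fpois;
  have [c1g g1] := g_bnd (lam_ge0 (t - 1) w); case: (N (t - 1) w) => [|n] //=.
  have n1 : 1 <= n.+1%:R :> R by rewrite ler1n.
  by move=> lt_half; exfalso; have := lt_le_trans c1_gt0 c1g; lra.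
by move=> _; lra.
Qed.

Lemma lam_past_measurable t s :
  (forall x y, 0 <= x -> 0 <= y -> x < y -> g x < g y) \/
  (forall x y, 0 <= x -> 0 <= y -> x < y -> g y < g x) ->
  s <= t -> exists2 h : R -> R, measurable_fun setT h & lam s = h \o lam t.
Proof.
move=> g_mono; have [phi mphi phiK] := fpois_measurable_linv g_mono g_bnd01.
suff lam_shift (k : nat) : exists2 h : R -> R, measurable_fun setT h &
    lam s = h \o lam (s + k%:Z).
  by move=> st; have [h mh ->] := lam_shift `|t - s|%N; exists h => //; congr (_ \o lam _); lia.
elim: k => [|k [h mh lam_s]]; first by exists id => //; rewrite addr0.
exists (h \o phi); first exact: measurableT_comp.
apply/funext => w; rewrite lam_s /= [in RHS]lam_rec phiK ?lam_ge0 //.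
by congr (h (lam _ w)); lia.
Qed.

Hypothesis lam_meas : forall t, measurable_fun setT (lam t).
Hypothesis N_poisson : forall (t : int) (A : set T) (k : nat),
  gen_sigma (fun s w => ((N s w)%:R, lam s w) : R * R) [set s | s <= t - 1] A ->
  P (A `&` [set w | N t w = k]) = (\int[P]_(w in A) (poisson_pmf (lam t w) k)%:E)%E.

(* [P(lam_t < 1/2) = P(N_{t-1} = 0) = E exp(-lam_{t-1})] with [lam_{t-1} >= c1 > 0]. *)
Lemma prob_lam_lt_half t : exists2 p, P [set w | lam t w < 1 / 2] = p%:E & 0 < p < 1.
Proof.
rewrite lam_lt_half -[X in P X]setTI N_poisson; last exact: gen_sigma_setT.
have expR_bnd w : 0 < expR (- lam (t - 1) w) <= expR (- c1).
  by rewrite expR_gt0 ler_expR lerN2 lam_ge_c1.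
have [p Ip /andP[p0 pc1]] := integral_probability_gt0_bounded P
  (measurableT_comp (@measurable_expR R) (measurable_funN (lam_meas (t - 1)))) expR_bnd.
exists p; last by rewrite p0 (le_lt_trans pc1) // expR_lt1 oppr_lt0.
rewrite -Ip; apply: eq_integral => w _.
by rewrite /poisson_pmf (lt_le_trans c1_gt0 (lam_ge_c1 _ w)) expr0 mul1r fact0 invr1 mul1r.
Qed.

End poisson_autoregression.

Theorem mainTheorem9 (R : realType) (g : R -> R) (c1 c2 : R)
  (hc1 : 0 < c1) (hc2 : c2 < 1 / 2)
  (hmono : (forall x y, 0 <= x -> 0 <= y -> x < y -> g x < g y) \/
           (forall x y, 0 <= x -> 0 <= y -> x < y -> g y < g x))
  (hbnd : forall l, 0 <= l -> c1 <= g l /\ g l < 1 / 2)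
  (hlip : forall l l', 0 <= l -> 0 <= l' -> `|g l - g l'| <= c2 * `|l - l'|)
  (d : measure_display) (T : measurableType d) (P : probability T R)
  (N : int -> T -> nat) (lam : int -> T -> R)
  (hNmeas : forall t, measurable_fun setT (fun w => (N t w)%:R : R))
  (hlmeas : forall t, measurable_fun setT (lam t))
  (hlpos : forall t w, 0 <= lam t w)
  (hstat : strictly_stationary P (fun t w => ((N t w)%:R, lam t w) : R * R))
  (hpois : forall (t : int) (A : set T) (k : nat),
     gen_sigma (fun s w => ((N s w)%:R, lam s w) : R * R) [set s | s <= t - 1] A ->
     P (A `&` [set w | N t w = k]) =
     (\int[P]_(w in A) (poisson_pmf (lam t w) k)%:E)%E)
  (hrec : forall t w, lam t w = fpois g (lam (t - 1) w) (N (t - 1) w)%:R) :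
  (forall l l' y y', 0 <= l -> 0 <= l' ->
     `|fpois g l y - fpois g l' y'| <= c2 * `|l - l'| + 1 / 2 * `|y - y'|)
  /\ c2 + 1 / 2 < 1
  /\ (forall t w, 2 * g (lam (t - 1) w) =
                  2 * lam t w - (Num.floor (2 * lam t w))%:~R)
  /\ (forall t s, s <= t -> exists h : R -> R,
        measurable_fun setT h /\ forall w, lam s w = h (lam t w))
  /\ ~ strongly_mixing P lam
  /\ ~ strongly_mixing P (fun t w => ((N t w)%:R, lam t w) : R * R).
Proof.
have past t s (st : s <= t) := lam_past_measurable hc1 hbnd hlpos hrec hmono st.
have [p Pp p01] := prob_lam_lt_half hc1 hbnd hlpos hrec hlmeas hpois 0.
have lam0_det n : exists2 h : R -> R, measurable_fun setT h & lam 0 = h \o lam n%:Z.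
  by apply: past; lia.
have mB : measurable [set x : R | x < 1 / 2].
  by rewrite -[X in measurable X]/(`]-oo, 1 / 2[%classic : set R); exact: measurable_itv.
split; first by move=> *; exact: fpois_lipschitz.
split; first lra.
split; first exact: (twice_g_lam hc1 hbnd hlpos hrec).
split.
  by move=> t s st; have [h mh ->] := past t s st; exists h.
split; first exact: (determined_not_strongly_mixing mB lam0_det Pp).
apply: (determined_not_strongly_mixing (Y := lam 0) mB _ Pp p01) => n.
have [h mh ->] := lam0_det n.
by exists (h \o snd) => //; exact: measurableT_comp.
Qed.
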